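(* Consider the heterogeneous database model described in the context, with $P(R\in\mathcal D)>0$, and let $0<\alpha_1,\alpha_2\le1$. (a) Let $t_{j,\alpha_j}$ be the largest $t\ge0$ with $P(LR_j(S_j)\ge t)\ge\alpha_j$ ($j=1,2$), and $\mathcal D_{\alpha_1,\alpha_2}=\{i\in\mathcal D_1: LR_1(P_i)\ge t_{1,\alpha_1}\}\cup\{i\in\mathcal D_2: LR_2(P_i)\ge t_{2,\alpha_2}\}$. Then \[ P(R\in\mathcal D_{\alpha_1,\alpha_2}\mid R\in\mathcal D)\ge\alpha_1P(R\in\mathcal D_1\mid R\in\mathcal D)+\alpha_2P(R\in\mathcal D_2\mid R\in\mathcal D). \] (b) Let $\mathcal D^{\alpha_1,\alpha_2}=\mathcal D_1^{\alpha_1}\cup\mathcal D_2^{\alpha_2}$, where for $j=1,2$ with $P(R\in\mathcal D_j)>0$, $\mathcal D_j^{\alpha_j}$ is obtained by applying the following construction to the indices in $\mathcal D_j$ alone: order the indices $i\in\mathcal D_j$ by decreasing $r_i\pi_i$ (with $r_i=LR_j(P_i)$ and a fixed tie-breaking rule), and take the smallest initial segment whose sum of $r_i\pi_i$ is at least $\alpha_j\sum_{i\in\mathcal D_j}r_i\pi_i$ (if $P(R\in\mathcal D_j)=0$ the corresponding term below is $0$). Then the same lower bound holds: \[ P(R\in\mathcal D^{\alpha_1,\alpha_2}\mid R\in\mathcal D)\ge\alpha_1P(R\in\mathcal D_1\mid R\in\mathcal D)+\alpha_2P(R\in\mathcal D_2\mid R\in\mathcal D). \]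
   Context: Let $E_1,E_2$ be countable sets and for $j=1,2$ let $S_j,G_j$ be $E_j$-valued random variables with $P(S_j=e)>0\Rightarrow P(G_j=e)>0$ for all $e\in E_j$; define $LR_j(e)=P(S_j=e)/P(G_j=e)$ if $P(G_j=e)>0$ and $0$ otherwise. Fix $N\ge1$ and a partition $\{1,\dots,N\}=\mathcal D_1\sqcup\mathcal D_2$; write $\mathcal D=\{1,\dots,N\}$. Let $R$ be a random variable with values in $\{0,1,\dots,N\}$ ($R=0$ meaning $R\notin\mathcal D$), with $\pi_i=P(R=i)$. There are random variables $P_1,\dots,P_N$, with $P_i$ taking values in $E_j$ when $i\in\mathcal D_j$, such that conditionally on $R=k$ ($0\le k\le N$) the $P_i$ are independent, $P_i$ has the distribution of $S_j$ if $i=k\in\mathcal D_j$ and of $G_j$ if $i\ne k$, $i\in\mathcal D_j$. *)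

From Stdlib Require Import Reals List Arith ClassicalEpsilon.
Open Scope R_scope.

Definition is_pmf (p : nat -> R) : Prop :=
  (forall n, 0 <= p n) /\ infinite_sum p 1.

Definition ind (p : nat -> R) (A : nat -> Prop) (n : nat) : R :=
  if excluded_middle_informative (A n) then p n else 0.

Definition Pr (p : nat -> R) (A : nat -> Prop) : R :=
  epsilon (inhabits 0) (fun l => infinite_sum (ind p A) l).

Definition CPr (p : nat -> R) (A B : nat -> Prop) : R :=
  Pr p (fun w => A w /\ B w) / Pr p B.

Definition LR {E : Type} (p : nat -> R) (S G : nat -> E) (e : E) : R :=
  if Rlt_dec 0 (Pr p (fun w => G w = e))
  then Pr p (fun w => S w = e) / Pr p (fun w => G w = e)
  else 0.

Definition sumR (l : list nat) (f : nat -> R) : R :=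
  fold_right (fun i a => f i + a) 0 l.
Definition prodR (l : list nat) (f : nat -> R) : R :=
  fold_right (fun i a => f i * a) 1 l.

Definition idx (N : nat) : list nat := seq 1 N.
Definition idxD (N : nat) (Dj : nat -> bool) : list nat := filter Dj (idx N).

Definition before (w : nat -> R) (prio : nat -> nat) (i j : nat) : bool :=
  if Rlt_dec (w j) (w i) then true
  else if Rlt_dec (w i) (w j) then false
  else Nat.ltb (prio i) (prio j).

Fixpoint insertR (bf : nat -> nat -> bool) (x : nat) (l : list nat) : list nat :=
  match l with
  | nil => x :: nil
  | y :: l' => if bf x y then x :: y :: l' else y :: insertR bf x l'
  end.

Fixpoint isort (bf : nat -> nat -> bool) (l : list nat) : list nat :=
  match l with
  | nil => nil
  | x :: l' => insertR bf x (isort bf l')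
  end.

Fixpoint take_until (w : nat -> R) (acc thr : R) (l : list nat) : list nat :=
  match l with
  | nil => nil
  | x :: l' => if Rle_dec thr acc then nil else x :: take_until w (acc + w x) thr l'
  end.

Definition top_segment (w : nat -> R) (prio : nat -> nat) (alpha : R)
    (L : list nat) : list nat :=
  take_until w 0 (alpha * sumR L w) (isort (before w prio) L).

Definition is_largest_threshold {E : Type} (p : nat -> R) (S G : nat -> E)
    (alpha t : R) : Prop :=
  0 <= t /\ alpha <= Pr p (fun w => t <= LR p S G (S w)) /\
  (forall t', 0 <= t' -> alpha <= Pr p (fun w => t' <= LR p S G (S w)) -> t' <= t).

From Pilot Require Import Defs.
From Stdlib Require Import Reals List Arith Lra Lia ClassicalEpsilon Classical
  FunctionalExtensionality PropExtensionality Permutation Cantor.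
Open Scope R_scope.

(* The argument is carried out for one group at a time (section OneGroup),
   the other group being a passive block of records; the two group bounds are
   then combined by [CPr_mixture_bound].
   (a) Conditionally on R = k and on the records at all indices other than k,
       the record at k has the law of S_j ([slice_law]).  Hence
       P(R = k, T(P_k)) = P(T(S_j)) P(R = k) for any event T ([selected_law]);
       for T = {LR_j >= t_j} this gives the fraction alpha_j by the choice of t_j.
   (b) Conditionally on the whole configuration of records, Bayes' rule makes
       P(R = i | configuration) proportional to LR_j(P_i) pi_i ([config_atom]),
       so a top segment carrying a fraction alpha_j of these scores carries a
       fraction alpha_j of the conditional probability ([top_segment_mass],
       [config_level_bound]); summing over configurations gives the bound.
   Conditioning on a configuration is realised by disintegrating along an
   injective natural-number code of the configuration ([config_code], [Pr_total]). *)

Lemma infinite_sum_ext f g l :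
  (forall n, f n = g n) -> infinite_sum f l -> infinite_sum g l.
Proof.
  intros Hfg Hf eps Heps; destruct (Hf eps Heps) as [M HM]; exists M; intros n Hn.
  rewrite <- (sum_eq f g) by auto; auto.
Qed.

Lemma infinite_sum_zero : infinite_sum (fun _ => 0) 0.
Proof.
  intros eps Heps; exists 0%nat; intros n _.
  unfold Rdist; rewrite sum_cte, Rmult_0_l, Rminus_0_r, Rabs_R0; lra.
Qed.

Lemma infinite_sum_plus f g a b :
  infinite_sum f a -> infinite_sum g b -> infinite_sum (fun n => f n + g n) (a + b).
Proof.
  intros Hf Hg eps Heps; destruct (CV_plus _ _ _ _ Hf Hg eps Heps) as [M HM].
  exists M; intros n Hn; rewrite plus_sum; auto.
Qed.

Lemma infinite_sum_scal c f l :
  infinite_sum f l -> infinite_sum (fun n => c * f n) (c * l).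
Proof.
  intro Hf.
  assert (Hc : Un_cv (fun _ : nat => c) c).
  { intros eps Heps; exists 0%nat; intros; unfold Rdist; rewrite Rminus_diag, Rabs_R0; lra. }
  intros eps Heps; destruct (CV_mult _ _ _ _ Hc Hf eps Heps) as [M HM].
  exists M; intros n Hn; rewrite <- (sum_eq (fun i => f i * c)), <- scal_sum; auto.
  intros; ring.
Qed.

Lemma infinite_sum_le f g a b :
  (forall n, f n <= g n) -> infinite_sum f a -> infinite_sum g b -> a <= b.
Proof.
  intros Hfg Hf Hg; apply (@Rle_cv_lim (sum_f_R0 f) (sum_f_R0 g)); auto.
  intro; apply sum_Rle; auto.
Qed.

Lemma bounded_on_initial_segment (Y : nat -> nat) n0 :
  exists M, forall w, (w <= n0)%nat -> (Y w <= M)%nat.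
Proof.
  induction n0 as [|n0 [M HM]].
  - exists (Y 0%nat); intros w Hw; replace w with 0%nat by lia; lia.
  - exists (Nat.max M (Y (S n0))); intros w Hw.
    destruct (Nat.eq_dec w (S n0)) as [->|]; [lia|]; specialize (HM w ltac:(lia)); lia.
Qed.

Lemma sumR_ext L f g : (forall k, In k L -> f k = g k) -> sumR L f = sumR L g.
Proof. induction L; simpl; intros H; auto; rewrite H, IHL; auto. Qed.

Lemma prodR_ext L f g : (forall k, In k L -> f k = g k) -> prodR L f = prodR L g.
Proof. induction L; simpl; intros H; auto; rewrite H, IHL; auto. Qed.

Lemma sumR_ge0 L f : (forall k, In k L -> 0 <= f k) -> 0 <= sumR L f.
Proof. induction L; simpl; intros; [lra|]; apply Rplus_le_le_0_compat; auto. Qed.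

Lemma prodR_ge0 L f : (forall k, In k L -> 0 <= f k) -> 0 <= prodR L f.
Proof. induction L; simpl; intros; [lra|]; apply Rmult_le_pos; auto. Qed.

Lemma sumR_le L f g : (forall k, In k L -> f k <= g k) -> sumR L f <= sumR L g.
Proof. induction L; simpl; intros; [lra|]; apply Rplus_le_compat; auto. Qed.

Lemma sumR_scal L f c : sumR L (fun k => f k * c) = sumR L f * c.
Proof. induction L; simpl; [|rewrite IHL]; ring. Qed.

Lemma sumR_app L1 L2 f : sumR (L1 ++ L2) f = sumR L1 f + sumR L2 f.
Proof. induction L1; simpl; [|rewrite IHL1]; ring. Qed.

Lemma sumR_perm L L' f : Permutation L L' -> sumR L f = sumR L' f.
Proof. induction 1; simpl; lra. Qed.

Lemma prodR_pick L i c b : NoDup L -> In i L ->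
  prodR L (fun k => if Nat.eqb k i then c else b k)
  = c * prodR L (fun k => if Nat.eqb k i then 1 else b k).
Proof.
  induction L as [|a L IH]; simpl; intros Hnd Hi; [tauto|]; inversion Hnd; subst.
  destruct (Nat.eqb_spec a i) as [<-|Hai].
  - rewrite (prodR_ext L _ b), (prodR_ext L (fun k => if Nat.eqb k a then 1 else b k) b);
      [ring| |]; intros k Hk; destruct (Nat.eqb_spec k a); subst; tauto.
  - destruct Hi as [->|Hi]; [tauto|]; rewrite IH by auto; ring.
Qed.

Fixpoint list_code (l : list nat) : nat :=
  match l with
  | nil => 0%nat
  | a :: l' => S (Cantor.to_nat (a, list_code l'))
  end.

Lemma list_code_inj l1 l2 : list_code l1 = list_code l2 -> l1 = l2.
Proof.
  revert l2; induction l1 as [|a l1 IH]; intros [|b l2]; cbn [list_code]; intro H;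
    try discriminate; auto.
  apply Nat.succ_inj, Cantor.to_nat_inj in H; injection H; intros.
  subst; f_equal; auto.
Qed.

(* The elements of [top_segment w prio alpha L] form an initial
   segment of [L] reordered, hence carry at least a fraction [alpha] of the
   total weight. *)

Lemma insertR_perm bf x l : Permutation (insertR bf x l) (x :: l).
Proof.
  induction l as [|a l IH]; simpl; auto; destruct (bf x a); auto.
  eapply perm_trans; [apply perm_skip, IH | apply perm_swap].
Qed.

Lemma isort_perm bf l : Permutation (isort bf l) l.
Proof. induction l; simpl; auto; eapply perm_trans; [apply insertR_perm | auto]. Qed.

Lemma isort_ext bf bf' l :
  (forall x y, In x l -> In y l -> bf x y = bf' x y) -> isort bf l = isort bf' l.
Proof.
  induction l as [|a l IH]; simpl; intros H; auto.
  rewrite IH by (intros; apply H; auto).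
  assert (Hins : forall s, (forall y, In y s -> In y l) ->
                 insertR bf a s = insertR bf' a s).
  { induction s as [|b s IHs]; simpl; intros Hs; auto.
    rewrite H by auto; destruct (bf' a b); auto; rewrite IHs; auto. }
  apply Hins; intros y Hy; apply (Permutation_in _ (isort_perm bf' l)); auto.
Qed.

Lemma take_until_ext w w' acc thr l : (forall x, In x l -> w x = w' x) ->
  take_until w acc thr l = take_until w' acc thr l.
Proof.
  revert acc; induction l as [|a l IH]; simpl; intros acc H; auto.
  destruct Rle_dec; auto; rewrite H, IH by auto; auto.
Qed.

Lemma take_until_prefix w acc thr l : exists r, l = take_until w acc thr l ++ r.
Proof.
  revert acc; induction l as [|a l IH]; simpl; intros acc; [exists nil; auto|].
  destruct Rle_dec; [exists (a :: l); auto|].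
  destruct (IH (acc + w a)) as [r Hr]; exists r; simpl; rewrite <- Hr; auto.
Qed.

Lemma take_until_reaches w thr l acc :
  thr <= acc + sumR l w -> thr <= acc + sumR (take_until w acc thr l) w.
Proof.
  revert acc; induction l as [|a l IH]; simpl; intros acc H; auto.
  destruct Rle_dec; simpl; [lra|]; specialize (IH (acc + w a) ltac:(lra)); lra.
Qed.

Lemma top_segment_ext w w' prio alpha L : (forall k, In k L -> w k = w' k) ->
  top_segment w prio alpha L = top_segment w' prio alpha L.
Proof.
  intro H; unfold top_segment; rewrite (sumR_ext L w w' H).
  rewrite (isort_ext (before w prio) (before w' prio))
    by (intros x y Hx Hy; unfold before; rewrite !H; auto).
  apply take_until_ext; intros x Hx; apply H.
  apply (Permutation_in _ (isort_perm (before w' prio) L)); auto.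
Qed.

Lemma sumR_restrict_prefix s r w : NoDup (s ++ r) ->
  sumR (s ++ r) (fun k => if in_dec Nat.eq_dec k s then w k else 0) = sumR s w.
Proof.
  intro Hnd; rewrite sumR_app, (sumR_ext s _ w) by (intros k Hk; destruct in_dec; tauto).
  rewrite (sumR_ext r _ (fun _ => 0)).
  - enough (Hzero : sumR r (fun _ => 0) = 0) by lra.
    clear Hnd; induction r; simpl; lra.
  - intros k Hr; destruct in_dec as [Hs|]; auto; exfalso.
    destruct (in_split _ _ Hs) as [s1 [s2 ->]].
    rewrite <- app_assoc in Hnd; apply NoDup_remove_2 in Hnd.
    apply Hnd, in_or_app; right; apply in_or_app; right; auto.
Qed.

Lemma top_segment_mass w prio alpha L :
  (forall k, In k L -> 0 <= w k) -> 0 <= alpha <= 1 -> NoDup L ->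
  alpha * sumR L w
  <= sumR L (fun k => if in_dec Nat.eq_dec k (top_segment w prio alpha L) then w k else 0).
Proof.
  intros Hw Halpha Hnd; unfold top_segment.
  pose proof (isort_perm (before w prio) L) as Hperm.
  pose proof (take_until_reaches w (alpha * sumR L w) (isort (before w prio) L) 0) as Hreach.
  destruct (take_until_prefix w 0 (alpha * sumR L w) (isort (before w prio) L)) as [r Hr].
  revert Hr Hreach Hperm.
  generalize (take_until w 0 (alpha * sumR L w) (isort (before w prio) L)) as s.
  generalize (isort (before w prio) L) as l; intros l s -> Hreach Hperm.
  assert (HS : 0 <= sumR L w) by (apply sumR_ge0; auto).
  rewrite (sumR_perm _ _ w Hperm) in Hreach; specialize (Hreach ltac:(nra)).
  rewrite <- (sumR_perm _ _ (fun k => if in_dec Nat.eq_dec k s then w k else 0) Hperm).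
  rewrite sumR_restrict_prefix; [lra|].
  apply (Permutation_NoDup (Permutation_sym Hperm)); auto.
Qed.

Definition joint_law {Ea Eb : Type} (p : nat -> R) (Rv : nat -> nat) (K : nat -> Prop)
    (La Lb : list nat) (Pa : nat -> nat -> Ea) (Pb : nat -> nat -> Eb)
    (Sa Ga : nat -> Ea) (Sb Gb : nat -> Eb) : Prop :=
  forall k, K k -> forall (ea : nat -> Ea) (eb : nat -> Eb),
    Pr p (fun w => Rv w = k
           /\ (forall i, In i La -> Pa i w = ea i)
           /\ (forall i, In i Lb -> Pb i w = eb i))
    = Pr p (fun w => Rv w = k)
      * prodR La (fun i => if Nat.eqb i k then Pr p (fun w => Sa w = ea i)
                           else Pr p (fun w => Ga w = ea i))
      * prodR Lb (fun i => if Nat.eqb i k then Pr p (fun w => Sb w = eb i)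
                           else Pr p (fun w => Gb w = eb i)).

Section DiscreteProbability.
Variable p : nat -> R.
Hypothesis Hp : is_pmf p.

Lemma ind_bounds A n : 0 <= Defs.ind p A n <= p n.
Proof.
  destruct Hp as [Hpos _]; specialize (Hpos n).
  unfold Defs.ind; destruct excluded_middle_informative; lra.
Qed.

Lemma Pr_spec A : infinite_sum (Defs.ind p A) (Pr p A).
Proof.
  unfold Pr; apply epsilon_spec; destruct Hp as [_ Hsum].
  destruct (Rseries_CV_comp (Defs.ind p A) p (ind_bounds A)) as [l Hl].
  - exists 1; exact Hsum.
  - exists l; exact Hl.
Qed.

Lemma Pr_ext (A B : nat -> Prop) : (forall w, A w <-> B w) -> Pr p A = Pr p B.
Proof.
  intro H; f_equal; apply functional_extensionality; intro w;
    apply propositional_extensionality; auto.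
Qed.

Lemma Pr_ge0 A : 0 <= Pr p A.
Proof.
  apply (infinite_sum_le (fun _ => 0) (Defs.ind p A));
    [apply ind_bounds | apply infinite_sum_zero | apply Pr_spec].
Qed.

Lemma Pr_mono (A B : nat -> Prop) : (forall w, A w -> B w) -> Pr p A <= Pr p B.
Proof.
  intro HAB; apply (infinite_sum_le (Defs.ind p A) (Defs.ind p B)); try apply Pr_spec.
  intro n; destruct Hp as [Hpos _]; specialize (Hpos n); unfold Defs.ind.
  destruct (excluded_middle_informative (A n)), (excluded_middle_informative (B n));
    firstorder lra.
Qed.

Lemma Pr_empty (A : nat -> Prop) : (forall w, ~ A w) -> Pr p A = 0.
Proof.
  intro H; apply (uniqueness_sum (Defs.ind p A)); [apply Pr_spec|].
  apply (infinite_sum_ext (fun _ => 0)); [|apply infinite_sum_zero].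
  intro n; unfold Defs.ind; destruct excluded_middle_informative; firstorder.
Qed.

Lemma Pr_True : Pr p (fun _ => True) = 1.
Proof.
  apply (uniqueness_sum (Defs.ind p (fun _ => True))); [apply Pr_spec|].
  apply (infinite_sum_ext p); [|apply Hp].
  intro n; unfold Defs.ind; destruct excluded_middle_informative; tauto.
Qed.

Lemma Pr_add (A B : nat -> Prop) : (forall w, A w -> B w -> False) ->
  Pr p (fun w => A w \/ B w) = Pr p A + Pr p B.
Proof.
  intro Hdisj; apply (uniqueness_sum (Defs.ind p (fun w => A w \/ B w))); [apply Pr_spec|].
  apply (infinite_sum_ext (fun n => Defs.ind p A n + Defs.ind p B n));
    [|apply infinite_sum_plus; apply Pr_spec].
  intro n; unfold Defs.ind.
  destruct (excluded_middle_informative (A n)), (excluded_middle_informative (B n)),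
    (excluded_middle_informative (A n \/ B n)); firstorder; lra.
Qed.

Lemma Pr_split (A B : nat -> Prop) :
  Pr p A = Pr p (fun w => A w /\ B w) + Pr p (fun w => A w /\ ~ B w).
Proof. rewrite <- Pr_add by tauto; apply Pr_ext; intro; tauto. Qed.

Lemma Pr_initial_segment n0 : Pr p (fun w => (w <= n0)%nat) = sum_f_R0 p n0.
Proof.
  apply (uniqueness_sum (Defs.ind p (fun w => (w <= n0)%nat))); [apply Pr_spec|].
  assert (Hk : forall k, sum_f_R0 (Defs.ind p (fun w => (w <= n0)%nat)) (n0 + k)
                         = sum_f_R0 p n0).
  { induction k as [|k IH].
    - rewrite Nat.add_0_r; apply sum_eq; intros i Hi.
      unfold Defs.ind; destruct excluded_middle_informative; [auto|lia].
    - rewrite Nat.add_succ_r; simpl; rewrite IH.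
      unfold Defs.ind; destruct excluded_middle_informative; [lia|lra]. }
  intros eps Heps; exists n0; intros n Hn; replace n with (n0 + (n - n0))%nat by lia.
  rewrite Hk; unfold Rdist; rewrite Rminus_diag, Rabs_R0; lra.
Qed.

Lemma Pr_beyond n0 : Pr p (fun w => ~ (w <= n0)%nat) = 1 - sum_f_R0 p n0.
Proof.
  rewrite <- Pr_True, (Pr_split (fun _ => True) (fun w => (w <= n0)%nat)),
    <- Pr_initial_segment.
  rewrite (Pr_ext (fun w => True /\ (w <= n0)%nat) (fun w => (w <= n0)%nat)) by tauto.
  rewrite (Pr_ext (fun w => True /\ ~ (w <= n0)%nat) (fun w => ~ (w <= n0)%nat)) by tauto.
  ring.
Qed.

Lemma Pr_total (Y : nat -> nat) (A : nat -> Prop) :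
  infinite_sum (fun m => Pr p (fun w => A w /\ Y w = m)) (Pr p A).
Proof.
  assert (Hpartial : forall M, sum_f_R0 (fun m => Pr p (fun w => A w /\ Y w = m)) M
                               = Pr p (fun w => A w /\ (Y w <= M)%nat)).
  { induction M as [|M IH]; simpl.
    - apply Pr_ext; intro w; split; intros [? ?]; split; auto; lia.
    - rewrite IH, <- Pr_add by (intros w [_ ?] [_ ?]; lia).
      apply Pr_ext; intro w; split.
      + intros [[? ?]|[? ?]]; split; auto; lia.
      + intros [? ?]; destruct (Nat.eq_dec (Y w) (S M)); [right|left]; split; auto; lia. }
  intros eps Heps; destruct Hp as [_ Hsum]; destruct (Hsum eps Heps) as [n0 Hn0].
  specialize (Hn0 n0 (le_n _)); unfold Rdist in Hn0; apply Rabs_def2 in Hn0.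
  destruct (bounded_on_initial_segment Y n0) as [M0 HM0].
  exists M0; intros M HM; rewrite Hpartial.
  assert (Htail : Pr p (fun w => A w /\ ~ (Y w <= M)%nat)
                  <= Pr p (fun w => ~ (w <= n0)%nat)).
  { apply Pr_mono; intros w [_ Hw] Hwn0; apply Hw; specialize (HM0 w Hwn0); lia. }
  rewrite Pr_beyond in Htail.
  pose proof (Pr_ge0 (fun w => A w /\ ~ (Y w <= M)%nat)).
  rewrite (Pr_split A (fun w => (Y w <= M)%nat)).
  unfold Rdist; apply Rabs_def1; lra.
Qed.

Lemma Pr_list (X : nat -> nat) (B : nat -> Prop) L : NoDup L ->
  Pr p (fun w => In (X w) L /\ B w) = sumR L (fun k => Pr p (fun w => X w = k /\ B w)).
Proof.
  induction L as [|a L IH]; intros Hnd; simpl.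
  - apply Pr_empty; intros w [[] _].
  - inversion Hnd; subst; rewrite <- IH by auto.
    rewrite <- Pr_add by (intros w [Hx _] [Hx' _]; subst; auto).
    apply Pr_ext; intro w; split.
    + intros [[Hx|Hx] Hb]; [left|right]; auto.
    + intros [[Hx Hb]|[Hx Hb]]; split; auto.
Qed.


Lemma LR_ge0 {E : Type} (S G : nat -> E) e : 0 <= LR p S G e.
Proof.
  unfold LR; destruct Rlt_dec; [|lra].
  apply Rmult_le_pos; [apply Pr_ge0 | left; apply Rinv_0_lt_compat; auto].
Qed.

Lemma Pr_eq_LR {E : Type} (S G : nat -> E) e :
  (0 < Pr p (fun w => S w = e) -> 0 < Pr p (fun w => G w = e)) ->
  Pr p (fun w => S w = e) = LR p S G e * Pr p (fun w => G w = e).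
Proof.
  intro Hac; unfold LR; destruct Rlt_dec; [field; lra|].
  destruct (Rle_lt_or_eq_dec _ _ (Pr_ge0 (fun w => S w = e))) as [Hpos|<-];
    [specialize (Hac Hpos); lra | ring].
Qed.

Lemma CPr_mixture_bound (X Y C1 C2 B1 B2 : nat -> Prop) (a1 a2 : R) :
  0 < Pr p Y ->
  (forall w, C1 w -> Y w) -> (forall w, C2 w -> Y w) ->
  (forall w, C1 w -> C2 w -> False) ->
  (forall w, (C1 w /\ B1 w) \/ (C2 w /\ B2 w) -> X w) ->
  a1 * Pr p C1 <= Pr p (fun w => C1 w /\ B1 w) ->
  a2 * Pr p C2 <= Pr p (fun w => C2 w /\ B2 w) ->
  CPr p X Y >= a1 * CPr p C1 Y + a2 * CPr p C2 Y.
Proof.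
  intros HY HC1 HC2 Hdisj HX H1 H2; unfold CPr.
  rewrite (Pr_ext (fun w => C1 w /\ Y w) C1), (Pr_ext (fun w => C2 w /\ Y w) C2)
    by (intro w; split; [tauto | auto]).
  assert (Hcover : Pr p (fun w => C1 w /\ B1 w) + Pr p (fun w => C2 w /\ B2 w)
                   <= Pr p (fun w => X w /\ Y w)).
  { rewrite <- Pr_add by (intros w [? _] [? _]; eauto).
    apply Pr_mono; intros w Hw; split; auto; destruct Hw as [[? _]|[? _]]; auto. }
  apply Rle_ge; unfold Rdiv.
  apply Rle_trans with ((a1 * Pr p C1 + a2 * Pr p C2) * / Pr p Y); [right; ring|].
  apply Rmult_le_compat_r; [left; apply Rinv_0_lt_compat|]; lra.
Qed.

Section OneGroup.
Variables (Ea Eb : Type) (fa : Ea -> nat) (fb : Eb -> nat).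
Hypothesis fa_inj : forall x y, fa x = fa y -> x = y.
Hypothesis fb_inj : forall x y, fb x = fb y -> x = y.
Variables (Sa Ga : nat -> Ea) (Sb Gb : nat -> Eb) (Rv : nat -> nat)
  (Pa : nat -> nat -> Ea) (Pb : nat -> nat -> Eb)
  (K : nat -> Prop) (La Lb : list nat) (Da : nat -> bool).
Hypothesis La_nodup : NoDup La.
Hypothesis La_Da : forall i, In i La <-> Da i = true.
Hypothesis La_K : forall i, In i La -> K i.
Hypothesis Hjoint : joint_law p Rv K La Lb Pa Pb Sa Ga Sb Gb.

(* A code for the records at all indices except [k] (the one at [k] is masked);
   for [k] outside [La] it codes the whole configuration of records. *)
Definition config_code (k w : nat) : nat :=
  Cantor.to_nat (list_code (map (fun j => if Nat.eqb j k then 0%nat else fa (Pa j w)) La),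
                 list_code (map (fun j => fb (Pb j w)) Lb)).

Lemma config_code_eq k w w0 : config_code k w = config_code k w0 <->
  (forall j, In j La -> j <> k -> Pa j w = Pa j w0) /\ (forall j, In j Lb -> Pb j w = Pb j w0).
Proof.
  unfold config_code; split.
  - intro H; apply Cantor.to_nat_inj in H; injection H; intros Hb Ha.
    apply list_code_inj in Ha, Hb; rewrite map_ext_in_iff in Ha; rewrite map_ext_in_iff in Hb; split.
    + intros j Hj Hjk; specialize (Ha j Hj); simpl in Ha.
      destruct (Nat.eqb_spec j k); [tauto | auto].
    + intros j Hj; auto.
  - intros [Ha Hb]; f_equal; f_equal; f_equal; apply map_ext_in_iff; intros j Hj.
    + destruct (Nat.eqb_spec j k); auto; rewrite Ha; auto.
    + rewrite Hb; auto.
Qed.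

(* The probability of [R = k] jointly with given records at the indices other
   than [k], the record at [k] being summed out. *)
Definition rest_weight (k w0 : nat) : R :=
  Pr p (fun w => Rv w = k)
  * prodR La (fun i => if Nat.eqb i k then 1 else Pr p (fun w => Ga w = Pa i w0))
  * prodR Lb (fun i => if Nat.eqb i k then Pr p (fun w => Sb w = Pb i w0)
                       else Pr p (fun w => Gb w = Pb i w0)).

Lemma atom_law k w0 e : In k La ->
  Pr p (fun w => Rv w = k /\ Pa k w = e /\ config_code k w = config_code k w0)
  = Pr p (fun w => Sa w = e) * rest_weight k w0.
Proof.
  intro Hk; set (ea := fun i => if Nat.eqb i k then e else Pa i w0).
  rewrite (Pr_ext _ (fun w => Rv w = k /\ (forall i, In i La -> Pa i w = ea i)
                              /\ (forall i, In i Lb -> Pb i w = Pb i w0))).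
  - rewrite (Hjoint k (La_K k Hk)).
    rewrite (prodR_ext La _ (fun i => if Nat.eqb i k then Pr p (fun w => Sa w = e)
                                      else Pr p (fun w => Ga w = Pa i w0)))
      by (intros i _; unfold ea; destruct (Nat.eqb i k); auto).
    rewrite prodR_pick by auto; unfold rest_weight; ring.
  - intro w; rewrite config_code_eq; unfold ea; split.
    + intros (Hr & He & Ha & Hb); repeat split; auto.
      intros i Hi; destruct (Nat.eqb_spec i k); subst; auto.
    + intros (Hr & Ha & Hb); pose proof (Ha k Hk) as Hek; rewrite Nat.eqb_refl in Hek.
      repeat split; auto; intros j Hj Hjk; rewrite Ha by auto.
      destruct (Nat.eqb_spec j k); tauto.
Qed.

(* Given the records at all other indices, the record at the true index [k] is
   distributed as [Sa]: on each level set of [config_code k], the event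
   [R = k /\ T (P_k)] has probability proportional to [Pr (T Sa)], uniformly in [T]. *)
Lemma slice_law k m : In k La -> exists c, forall T : Ea -> Prop,
  Pr p (fun w => (Rv w = k /\ T (Pa k w)) /\ config_code k w = m)
  = Pr p (fun w => T (Sa w)) * c.
Proof.
  intro Hk; destruct (classic (exists w0, config_code k w0 = m)) as [[w0 <-]|Hnone].
  2:{ exists 0; intro T; rewrite Rmult_0_r; apply Pr_empty; intros w [_ Hw]; eauto. }
  exists (rest_weight k w0); intro T; rewrite Rmult_comm.
  (* disintegrate both sides along the code of the record at [k] *)
  apply (uniqueness_sum (fun n => Pr p (fun w =>
    ((Rv w = k /\ T (Pa k w)) /\ config_code k w = config_code k w0) /\ fa (Pa k w) = n)));
    [apply Pr_total|].
  apply (infinite_sum_ext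
    (fun n => rest_weight k w0 * Pr p (fun w => T (Sa w) /\ fa (Sa w) = n)));
    [|apply infinite_sum_scal, Pr_total].
  intro n; destruct (classic (exists e, fa e = n /\ T e)) as [[e [<- HTe]]|Hnone].
  - rewrite (Pr_ext (fun w => T (Sa w) /\ fa (Sa w) = fa e) (fun w => Sa w = e))
      by (intro w; split; [intros [_ Hf]; auto | intros ->; auto]).
    rewrite (Pr_ext
      (fun w => ((Rv w = k /\ T (Pa k w)) /\ config_code k w = config_code k w0)
                /\ fa (Pa k w) = fa e)
      (fun w => Rv w = k /\ Pa k w = e /\ config_code k w = config_code k w0)).
    + rewrite atom_law by auto; ring.
    + intro w; split.
      * intros [[[? ?] ?] Hf]; apply fa_inj in Hf; auto.
      * intros (? & -> & ?); auto.
  - rewrite !Pr_empty; [ring | |].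
    + intros w [[[_ HT] _] Hf]; apply Hnone; eauto.
    + intros w [HT Hf]; apply Hnone; eauto.
Qed.

Lemma selected_law T k : In k La ->
  Pr p (fun w => Rv w = k /\ T (Pa k w))
  = Pr p (fun w => T (Sa w)) * Pr p (fun w => Rv w = k).
Proof.
  intro Hk.
  apply (uniqueness_sum (fun m => Pr p (fun w => (Rv w = k /\ T (Pa k w)) /\ config_code k w = m)));
    [apply Pr_total|].
  apply (infinite_sum_ext (fun m => Pr p (fun w => T (Sa w))
           * Pr p (fun w => (Rv w = k /\ True) /\ config_code k w = m))).
  - intro m; destruct (slice_law k m Hk) as [c Hc].
    pose proof (Hc (fun _ => True)) as Htrue; simpl in Htrue.
    rewrite (Hc T), Htrue, Pr_True; ring.
  - rewrite (Pr_ext (fun w => Rv w = k) (fun w => Rv w = k /\ True)) by tauto.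
    apply infinite_sum_scal, Pr_total.
Qed.

Lemma group_selected_bound (T : Ea -> Prop) (alpha : R) :
  alpha <= Pr p (fun w => T (Sa w)) ->
  alpha * Pr p (fun w => Da (Rv w) = true)
  <= Pr p (fun w => Da (Rv w) = true /\ T (Pa (Rv w) w)).
Proof.
  intro Halpha.
  rewrite (Pr_ext (fun w => Da (Rv w) = true) (fun w => In (Rv w) La /\ True))
    by (intro w; rewrite La_Da; tauto).
  rewrite (Pr_ext (fun w => Da (Rv w) = true /\ T (Pa (Rv w) w))
                  (fun w => In (Rv w) La /\ T (Pa (Rv w) w)))
    by (intro w; rewrite La_Da; tauto).
  rewrite !Pr_list by auto; rewrite Rmult_comm, <- sumR_scal; apply sumR_le; intros k Hk.
  rewrite (Pr_ext (fun w => Rv w = k /\ T (Pa (Rv w) w)) (fun w => Rv w = k /\ T (Pa k w)))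
    by (intro w; split; intros [-> ?]; auto).
  rewrite (Pr_ext (fun w => Rv w = k /\ True) (fun w => Rv w = k)) by tauto.
  rewrite selected_law by auto; pose proof (Pr_ge0 (fun w => Rv w = k)); nra.
Qed.


(* From now on the two groups are disjoint, index [0] (the event
   that the true index is outside the database) is not in [La], and [Sa] is
   absolutely continuous with respect to [Ga]; [config_code 0] then codes the
   whole configuration of records. *)
Hypothesis Sa_Ga_ac : forall e, 0 < Pr p (fun w => Sa w = e) -> 0 < Pr p (fun w => Ga w = e).
Hypothesis La_Lb_disj : forall i, In i La -> ~ In i Lb.
Hypothesis La_0 : ~ In 0%nat La.

Definition config_weight (w0 i : nat) : R :=
  LR p Sa Ga (Pa i w0) * Pr p (fun w => Rv w = i).

Definition null_config_prob (w0 : nat) : R :=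
  prodR La (fun j => Pr p (fun w => Ga w = Pa j w0))
  * prodR Lb (fun j => Pr p (fun w => Gb w = Pb j w0)).

Lemma config_atom w0 i : In i La ->
  Pr p (fun w => Rv w = i /\ config_code 0 w = config_code 0 w0)
  = config_weight w0 i * null_config_prob w0.
Proof.
  intro Hi; assert (Hi0 : i <> 0%nat) by (intros ->; tauto).
  rewrite (Pr_ext _ (fun w => Rv w = i /\ Pa i w = Pa i w0
                              /\ config_code i w = config_code i w0)).
  - rewrite atom_law, (Pr_eq_LR Sa Ga) by auto; unfold rest_weight, config_weight, null_config_prob.
    rewrite (prodR_ext Lb _ (fun j => Pr p (fun w => Gb w = Pb j w0)))
      by (intros j Hj; destruct (Nat.eqb_spec j i); subst; [exfalso; eapply La_Lb_disj|]; eauto).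
    replace (prodR La (fun j => Pr p (fun w => Ga w = Pa j w0)))
      with (prodR La (fun j => if Nat.eqb j i then Pr p (fun w => Ga w = Pa i w0)
                               else Pr p (fun w => Ga w = Pa j w0)))
      by (apply prodR_ext; intros j _; destruct (Nat.eqb_spec j i); subst; auto).
    rewrite (prodR_pick La i (Pr p (fun w => Ga w = Pa i w0))) by auto; ring.
  - intro w; rewrite !config_code_eq; split.
    + intros (Hr & Ha & Hb); repeat split; auto.
      intros j Hj _; apply Ha; auto; intros ->; tauto.
    + intros (Hr & Hai & Ha & Hb); repeat split; auto.
      intros j Hj _; destruct (Nat.eq_dec j i) as [->|]; auto.
Qed.

Lemma config_level_bound alpha prio (A : nat -> nat -> Prop) m :
  0 <= alpha <= 1 ->
  (forall w i, A w i <-> In i (top_segment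
     (fun i => LR p Sa Ga (Pa i w) * Pr p (fun w' => Rv w' = i)) prio alpha La)) ->
  alpha * Pr p (fun w => In (Rv w) La /\ config_code 0 w = m)
  <= Pr p (fun w => (In (Rv w) La /\ A w (Rv w)) /\ config_code 0 w = m).
Proof.
  intros Halpha HA.
  destruct (classic (exists w0, config_code 0 w0 = m)) as [[w0 <-]|Hnone].
  2:{ rewrite !Pr_empty by (intros w [_ Hw]; eauto); lra. }
  set (seg := top_segment (config_weight w0) prio alpha La).
  assert (Hseg : forall w, config_code 0 w = config_code 0 w0 -> forall i, A w i <-> In i seg).
  { intros w Hw i; rewrite HA; unfold seg.
    rewrite (top_segment_ext _ (config_weight w0)); [tauto|].
    intros k Hk; unfold config_weight; apply config_code_eq in Hw; destruct Hw as [Hw _].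
    rewrite Hw; auto; intros ->; tauto. }
  rewrite (Pr_ext (fun w => (In (Rv w) La /\ A w (Rv w)) /\ config_code 0 w = config_code 0 w0)
                  (fun w => In (Rv w) La /\ (A w (Rv w) /\ config_code 0 w = config_code 0 w0)))
    by (intro; tauto).
  rewrite !Pr_list by auto.
  rewrite (sumR_ext La (fun k => Pr p (fun w => Rv w = k /\ config_code 0 w = config_code 0 w0))
                        (fun i => config_weight w0 i * null_config_prob w0))
    by (intros; apply config_atom; auto).
  rewrite (sumR_ext La (fun k => Pr p (fun w => Rv w = k /\ A w (Rv w)
                                                /\ config_code 0 w = config_code 0 w0))
                       (fun i => (if in_dec Nat.eq_dec i seg then config_weight w0 i else 0)
                                   * null_config_prob w0)).
  - rewrite !sumR_scal.
    assert (Hnull : 0 <= null_config_prob w0)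
      by (apply Rmult_le_pos; apply prodR_ge0; intros; apply Pr_ge0).
    assert (Hscore : forall k, In k La -> 0 <= config_weight w0 k)
      by (intros; apply Rmult_le_pos; [apply LR_ge0 | apply Pr_ge0]).
    pose proof (top_segment_mass (config_weight w0) prio alpha La Hscore Halpha La_nodup)
      as Hmass; fold seg in Hmass; nra.
  - intros i Hi; destruct in_dec as [Hin|Hout].
    + rewrite <- config_atom by auto; apply Pr_ext; intro w; split; [tauto|].
      intros [-> Hw]; repeat split; auto; apply (Hseg w Hw); auto.
    + rewrite Rmult_0_l; apply Pr_empty; intros w (-> & HAw & Hw).
      apply Hout, (Hseg w Hw); auto.
Qed.

Lemma group_top_segment_bound alpha prio (A : nat -> nat -> Prop) :
  0 <= alpha <= 1 ->
  (0 < Pr p (fun w => Da (Rv w) = true) -> forall w i, A w i <-> In i (top_segment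
     (fun i => LR p Sa Ga (Pa i w) * Pr p (fun w' => Rv w' = i)) prio alpha La)) ->
  alpha * Pr p (fun w => Da (Rv w) = true) <= Pr p (fun w => Da (Rv w) = true /\ A w (Rv w)).
Proof.
  intros Halpha HA.
  pose proof (Pr_ge0 (fun w => Da (Rv w) = true /\ A w (Rv w))).
  destruct (Rlt_dec 0 (Pr p (fun w => Da (Rv w) = true))) as [Hpos|Hzero].
  2:{ pose proof (Pr_ge0 (fun w => Da (Rv w) = true)); nra. }
  rewrite (Pr_ext (fun w => Da (Rv w) = true) (fun w => In (Rv w) La))
    by (intro w; rewrite La_Da; tauto).
  rewrite (Pr_ext (fun w => Da (Rv w) = true /\ A w (Rv w))
                  (fun w => In (Rv w) La /\ A w (Rv w)))
    by (intro w; rewrite La_Da; tauto).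
  apply (infinite_sum_le
    (fun m => alpha * Pr p (fun w => In (Rv w) La /\ config_code 0 w = m))
    (fun m => Pr p (fun w => (In (Rv w) La /\ A w (Rv w)) /\ config_code 0 w = m)));
    [| apply infinite_sum_scal, Pr_total | apply Pr_total].
  intro m; apply (config_level_bound alpha prio A m Halpha (HA Hpos)).
Qed.

End OneGroup.

End DiscreteProbability.

Lemma joint_law_swap {Ea Eb : Type} p Rv K La Lb (Pa : nat -> nat -> Ea)
    (Pb : nat -> nat -> Eb) Sa Ga Sb Gb :
  joint_law p Rv K La Lb Pa Pb Sa Ga Sb Gb -> joint_law p Rv K Lb La Pb Pa Sb Gb Sa Ga.
Proof.
  intros Hjoint k Hk eb ea.
  rewrite (Pr_ext p _ (fun w => Rv w = k /\ (forall i, In i La -> Pa i w = ea i)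
                                /\ (forall i, In i Lb -> Pb i w = eb i))) by (intro; tauto).
  rewrite (Hjoint k Hk ea eb); ring.
Qed.

Lemma idxD_spec N (D : nat -> bool) : (forall i, D i = true -> (1 <= i <= N)%nat) ->
  NoDup (idxD N D) /\ (forall i, In i (idxD N D) <-> D i = true)
  /\ (forall i, In i (idxD N D) -> (i <= N)%nat) /\ ~ In 0%nat (idxD N D).
Proof.
  intros HD.
  assert (HIn : forall i, In i (idxD N D) <-> D i = true).
  { intro i; unfold idxD, idx; rewrite filter_In, in_seq; split; [tauto|].
    intro Hi; specialize (HD i Hi); split; [lia | auto]. }
  repeat split; [apply NoDup_filter, seq_NoDup | apply HIn | apply HIn | |];
    [intros i Hi; apply HIn, HD in Hi; lia | intros H0; apply HIn, HD in H0; lia].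
Qed.

Theorem mainTheorem7
  (E1 E2 : Type)
  (E1_countable : exists f : E1 -> nat, forall x y, f x = f y -> x = y)
  (E2_countable : exists f : E2 -> nat, forall x y, f x = f y -> x = y)
  (p : nat -> R) (Hp : is_pmf p)
  (S1 G1 : nat -> E1) (S2 G2 : nat -> E2)
  (HSG1 : forall e, 0 < Pr p (fun w => S1 w = e) -> 0 < Pr p (fun w => G1 w = e))
  (HSG2 : forall e, 0 < Pr p (fun w => S2 w = e) -> 0 < Pr p (fun w => G2 w = e))
  (N : nat) (HN : (1 <= N)%nat)
  (D1 D2 : nat -> bool)
  (HD1 : forall i, D1 i = true -> (1 <= i <= N)%nat)
  (HD2 : forall i, D2 i = true -> (1 <= i <= N)%nat)
  (HD : forall i, (1 <= i <= N)%nat -> xorb (D1 i) (D2 i) = true)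
  (Rv : nat -> nat) (HR : forall w, (Rv w <= N)%nat)
  (P1 : nat -> nat -> E1) (P2 : nat -> nat -> E2)
  (* conditionally on R = k the P_i are independent, P_i ~ S_j if i = k, G_j otherwise *)
  (Hjoint : forall (k : nat), (k <= N)%nat -> forall (e1 : nat -> E1) (e2 : nat -> E2),
     Pr p (fun w => Rv w = k
            /\ (forall i, In i (idxD N D1) -> P1 i w = e1 i)
            /\ (forall i, In i (idxD N D2) -> P2 i w = e2 i))
     = Pr p (fun w => Rv w = k)
       * prodR (idxD N D1) (fun i => if Nat.eqb i k then Pr p (fun w => S1 w = e1 i)
                                     else Pr p (fun w => G1 w = e1 i))
       * prodR (idxD N D2) (fun i => if Nat.eqb i k then Pr p (fun w => S2 w = e2 i)
                                     else Pr p (fun w => G2 w = e2 i)))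
  (HRD : 0 < Pr p (fun w => (1 <= Rv w <= N)%nat))
  (alpha1 alpha2 : R)
  (Ha1 : 0 < alpha1 <= 1) (Ha2 : 0 < alpha2 <= 1)
  (* part (a) thresholds *)
  (t1 t2 : R)
  (Ht1 : is_largest_threshold p S1 G1 alpha1 t1)
  (Ht2 : is_largest_threshold p S2 G2 alpha2 t2)
  (* part (b): tie-breaking rules and the sets D_j^{alpha_j} (random: depend on w) *)
  (prio1 prio2 : nat -> nat)
  (Hprio1 : forall i j, (1 <= i <= N)%nat -> (1 <= j <= N)%nat -> prio1 i = prio1 j -> i = j)
  (Hprio2 : forall i j, (1 <= i <= N)%nat -> (1 <= j <= N)%nat -> prio2 i = prio2 j -> i = j)
  (A1 A2 : nat -> nat -> Prop)
  (HA1 : 0 < Pr p (fun w => D1 (Rv w) = true) -> forall w i,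
      A1 w i <-> In i (top_segment
                         (fun i => LR p S1 G1 (P1 i w) * Pr p (fun w' => Rv w' = i))
                         prio1 alpha1 (idxD N D1)))
  (HA2 : 0 < Pr p (fun w => D2 (Rv w) = true) -> forall w i,
      A2 w i <-> In i (top_segment
                         (fun i => LR p S2 G2 (P2 i w) * Pr p (fun w' => Rv w' = i))
                         prio2 alpha2 (idxD N D2))) :
  let inD := fun w => (1 <= Rv w <= N)%nat in
  let bound := alpha1 * CPr p (fun w => D1 (Rv w) = true) inD
             + alpha2 * CPr p (fun w => D2 (Rv w) = true) inD in
  (* (a) *)
  CPr p (fun w => (D1 (Rv w) = true /\ t1 <= LR p S1 G1 (P1 (Rv w) w))
               \/ (D2 (Rv w) = true /\ t2 <= LR p S2 G2 (P2 (Rv w) w))) inD >= bound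
  /\
  (* (b) *)
  CPr p (fun w => A1 w (Rv w) \/ A2 w (Rv w)) inD >= bound.
Proof.
  intros inD bound.
  destruct E1_countable as [f1 Hf1], E2_countable as [f2 Hf2].
  destruct (idxD_spec N D1 HD1) as (Hnd1 & HL1 & HK1 & H01).
  destruct (idxD_spec N D2 HD2) as (Hnd2 & HL2 & HK2 & H02).
  assert (Hdisj : forall i, D1 i = true -> D2 i = true -> False)
    by (intros i H1 H2; pose proof (HD i (HD1 i H1)) as Hx; rewrite H1, H2 in Hx; discriminate).
  assert (HL12 : forall i, In i (idxD N D1) -> ~ In i (idxD N D2))
    by (intro i; rewrite HL1, HL2; eauto).
  assert (Hjoint1 : joint_law p Rv (fun k => (k <= N)%nat) (idxD N D1) (idxD N D2)
                      P1 P2 S1 G1 S2 G2) by exact Hjoint.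
  pose proof (joint_law_swap _ _ _ _ _ _ _ _ _ _ _ Hjoint1) as Hjoint2.
  pose proof (CPr_mixture_bound p Hp) as Hmix.
  split.
  (* (a): by the choice of t_j, P(LR_j(S_j) >= t_j) >= alpha_j *)
  - apply (Hmix _ inD _ _ (fun w => t1 <= LR p S1 G1 (P1 (Rv w) w))
             (fun w => t2 <= LR p S2 G2 (P2 (Rv w) w)) alpha1 alpha2 HRD
             (fun w => HD1 (Rv w)) (fun w => HD2 (Rv w)) (fun w => Hdisj (Rv w))); auto.
    + apply (group_selected_bound p Hp _ _ f1 f2 Hf1 Hf2 _ _ _ _ _ _ _ _ _ _ _
             Hnd1 HL1 HK1 Hjoint1 (fun e => t1 <= LR p S1 G1 e)), Ht1.
    + apply (group_selected_bound p Hp _ _ f2 f1 Hf2 Hf1 _ _ _ _ _ _ _ _ _ _ _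
             Hnd2 HL2 HK2 Hjoint2 (fun e => t2 <= LR p S2 G2 e)), Ht2.
  - apply (Hmix _ inD _ _ (fun w => A1 w (Rv w)) (fun w => A2 w (Rv w)) alpha1 alpha2 HRD
             (fun w => HD1 (Rv w)) (fun w => HD2 (Rv w)) (fun w => Hdisj (Rv w)));
      [intros w [[_ Hw]|[_ Hw]]; auto | |].
    + apply (group_top_segment_bound p Hp _ _ f1 f2 Hf1 Hf2 _ _ _ _ _ _ _ _ _ _ _
             Hnd1 HL1 HK1 Hjoint1 HSG1 HL12 H01 alpha1 prio1 A1); [lra | exact HA1].
    + apply (group_top_segment_bound p Hp _ _ f2 f1 Hf2 Hf1 _ _ _ _ _ _ _ _ _ _ _
             Hnd2 HL2 HK2 Hjoint2 HSG2 (fun i Hi Hi' => HL12 i Hi' Hi) H02 alpha2 prio2 A2);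
      [lra | exact HA2].
Qed.
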